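(* Let $f:\mathbb{R}^d\to\mathbb{R}$ be twice differentiable with $L$-Lipschitz Hessian. Let $x,g\in\mathbb{R}^d$, $H\in\mathbb{R}^{d\times d}$ symmetric, $M\ge L$, let $x^+$ be a global minimizer of $y\mapsto\Omega_{M,g,H}(y,x)$ and $r:=\|x^+-x\|$. Then $$ \frac{\bigl(-\lambda_{\min}(\nabla^2 f(x^+))\bigr)^3}{M^2}\;\le\;14Mr^3+\frac{4}{M^2}\|\nabla^2 f(x)-H\|^3 . $$
   Context: $\|\cdot\|$ is the Euclidean norm on vectors and the spectral norm on symmetric matrices; $\lambda_{\min}$ denotes the smallest eigenvalue. The Hessian of $f$ is $L$-Lipschitz means $\|\nabla^2 f(x)-\nabla^2 f(y)\|\le L\|x-y\|$ for all $x,y$. For $M>0$, $g\in\mathbb{R}^d$ and symmetric $H$, $\Omega_{M,g,H}(y,x):=\langle g,y-x\rangle+\frac12\langle H(y-x),y-x\rangle+\frac{M}{6}\|y-x\|^3$. *)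

From HB Require Import structures.
From mathcomp Require Import all_boot all_order all_algebra.
From mathcomp Require Import all_classical all_reals all_analysis.
Set Implicit Arguments. Unset Strict Implicit. Unset Printing Implicit Defensive.
Import Order.TTheory GRing.Theory Num.Theory.
Import numFieldNormedType.Exports.
Local Open Scope classical_set_scope.
Local Open Scope ring_scope.

Definition dotv {R : realType} {d : nat} (u v : 'cV[R]_d) : R :=
  \sum_(i < d) u i ord0 * v i ord0.
Definition enorm {R : realType} {d : nat} (v : 'cV[R]_d) : R :=
  Num.sqrt (dotv v v).

Definition specnorm {R : realType} {d : nat} (A : 'M[R]_d) : R :=
  sup [set enorm (A *m v) | v in [set v : 'cV[R]_d | enorm v = 1]].

(* Smallest eigenvalue (the eigenvalues of a real symmetric matrix form a
   finite nonempty set of reals when d > 0). *)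
Definition lambda_min {R : realType} {d : nat} (A : 'M[R]_d) : R :=
  inf [set a : R | eigenvalue A a].

Definition Omega {R : realType} {d : nat} (M : R) (g : 'cV[R]_d) (H : 'M[R]_d)
    (y x : 'cV[R]_d) : R :=
  dotv g (y - x) + 2^-1 * dotv (H *m (y - x)) (y - x)
  + M / 6 * enorm (y - x) ^+ 3.

From HB Require Import structures.
From mathcomp Require Import all_boot all_order all_algebra.
From mathcomp Require Import all_classical all_reals all_analysis.
From mathcomp Require Import ring lra.
Import Order.TTheory GRing.Theory Num.Theory.
Import numFieldNormedType.Exports.
Local Open Scope classical_set_scope.
Local Open Scope ring_scope.
Set Implicit Arguments. Unset Strict Implicit.

(* Write s = x+ - x and r = |s|.  The proof has three ingredients.
   1. Optimality of s for the cubic model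
        z |-> <g, z> + 1/2 <H z, z> + M/6 |z|^3.
      Expanding the model around s and splitting the cubic term gives a
      linear term (whose vanishing is the first-order condition
      g + H s + (M r / 2) s = 0) plus a quadratic term in H + (M r / 2) I plus
      a cubic remainder; moving along the sphere of radius r kills the
      remainder, so H + (M r / 2) I is positive semidefinite.
   2. Perturbation: quadratic forms on the unit sphere move by at most the
      spectral distance, so with e = |hess f(x) - H| and the Lipschitz bound
      |hess f(x+) - hess f(x)| <= L r <= M r, the form of hess f(x+) is at
      least -(3/2 M r + e); every eigenvalue, hence lambda_min, is too.
   3. Arithmetic: (3/2 M r + e)^3 <= 4 ((3/2 M r)^3 + e^3) <= 14 M^3 r^3 + 4 e^3.
   The file develops the Euclidean facts, the spectral facts, the scalar
   inequalities and the optimality conditions in turn, and ends with the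
   theorem. *)

Section InnerProduct.
Variables (R : realType) (d : nat).
Implicit Types (u v w : 'cV[R]_d) (A : 'M[R]_d).

Lemma dotvC u v : dotv u v = dotv v u.
Proof. by apply: eq_bigr => i _; rewrite mulrC. Qed.

Lemma dotvDl u v w : dotv (u + v) w = dotv u w + dotv v w.
Proof. by rewrite /dotv -big_split; apply: eq_bigr => i _; rewrite mxE mulrDl. Qed.

Lemma dotvZl (a : R) u v : dotv (a *: u) v = a * dotv u v.
Proof. by rewrite /dotv mulr_sumr; apply: eq_bigr => i _; rewrite mxE mulrA. Qed.

Lemma dotvDr u v w : dotv u (v + w) = dotv u v + dotv u w.
Proof. by rewrite dotvC dotvDl !(dotvC u). Qed.

Lemma dotvZr (a : R) u v : dotv u (a *: v) = a * dotv u v.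
Proof. by rewrite dotvC dotvZl dotvC. Qed.

Lemma dotv_mulmx A u v : dotv (A *m u) v = dotv u (A^T *m v).
Proof.
rewrite /dotv; under eq_bigr => i _ do rewrite mxE mulr_suml.
rewrite exchange_big /=; apply: eq_bigr => j _.
by rewrite mxE mulr_sumr; apply: eq_bigr => i _; rewrite mxE mulrCA mulrA.
Qed.

Lemma dotv_ge0 v : 0 <= dotv v v.
Proof. by apply: sumr_ge0 => i _; rewrite -expr2 sqr_ge0. Qed.

Lemma dotv_eq0 v : dotv v v = 0 -> v = 0.
Proof.
move=> /eqP; rewrite psumr_eq0 => [/allP v0|i _]; last by rewrite -expr2 sqr_ge0.
apply/matrixP => i j; rewrite (ord1 j) mxE.
by apply/eqP; have := v0 i (mem_index_enum i); rewrite /= mulf_eq0 orbb.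
Qed.

Lemma enorm_ge0 v : 0 <= enorm v.
Proof. exact: sqrtr_ge0. Qed.

Lemma enorm_sqr v : enorm v ^+ 2 = dotv v v.
Proof. by rewrite sqr_sqrtr // dotv_ge0. Qed.

Lemma enorm_sqrD u v :
  enorm (u + v) ^+ 2 = enorm u ^+ 2 + 2 * dotv u v + enorm v ^+ 2.
Proof. by rewrite !enorm_sqr dotvDl !dotvDr (dotvC v u); ring. Qed.

Lemma enorm_sqrZ (a : R) v : enorm (a *: v) ^+ 2 = a ^+ 2 * enorm v ^+ 2.
Proof. by rewrite !enorm_sqr dotvZl dotvZr mulrA -expr2. Qed.

(* Cauchy-Schwarz, via the nonnegativity of the discriminant of
   t |-> <u - t v, u - t v>. *)
Lemma dotv_sqr_le u v : dotv u v ^+ 2 <= dotv u u * dotv v v.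
Proof.
have quad (p q : R) :
    0 <= p ^+ 2 * dotv u u - 2 * p * q * dotv u v + q ^+ 2 * dotv v v.
  have := dotv_ge0 (p *: u - q *: v).
  rewrite -scaleNr dotvDl !dotvDr !dotvZl !dotvZr (dotvC v u).
  by congr (0 <= _); ring.
have ha := dotv_ge0 u; have hc := dotv_ge0 v.
have [c0|cpos] := eqVneq (dotv v v) 0.
  have [a0|apos] := eqVneq (dotv u u) 0.
    by have := quad 1 1; have := quad 1 (-1); rewrite c0 a0; nra.
  by have := quad (dotv u v) (dotv u u); rewrite c0; nra.
have := quad (dotv v v) (dotv u v).
have : 0 < dotv v v by rewrite lt_def cpos hc.
nra.
Qed.

Lemma norm_dotv_le u v : `|dotv u v| <= enorm u * enorm v.
Proof.
rewrite -sqrtrM ?dotv_ge0 // -sqrtr_sqr ler_sqrt ?dotv_sqr_le //.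
by rewrite mulr_ge0 ?dotv_ge0.
Qed.

Lemma enormD_dist u v : (enorm (u + v) - enorm u) ^+ 2 <= enorm v ^+ 2.
Proof.
have cs : dotv (u + v) u <= enorm (u + v) * enorm u.
  exact: le_trans (ler_norm _) (norm_dotv_le _ _).
have sqD := enorm_sqrD u v.
rewrite dotvDl (dotvC v u) -enorm_sqr in cs.
nra.
Qed.

End InnerProduct.

Section SpectralBounds.
Variables (R : realType) (d : nat).
Implicit Types (v : 'cV[R]_d) (A B : 'M[R]_d).

(* The supremum defining the spectral norm is finite: each coordinate of
   A v is bounded by the norm of the corresponding row (Cauchy-Schwarz). *)
Lemma specnorm_has_ubound A :
  has_ubound [set enorm (A *m v) | v in [set v : 'cV[R]_d | enorm v = 1]].
Proof.
exists (Num.sqrt (\sum_(i < d) dotv (row i A)^T (row i A)^T)).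
move=> _ [v /= v1 <-]; rewrite ler_sqrt; last by rewrite sumr_ge0 // => i _; exact: dotv_ge0.
apply: ler_sum => i _.
have -> : (A *m v) i ord0 = dotv (row i A)^T v.
  by rewrite mxE; apply: eq_bigr => j _; rewrite !mxE.
by rewrite -expr2 (le_trans (dotv_sqr_le _ _)) // -[dotv v v]enorm_sqr v1 expr1n mulr1.
Qed.

Lemma specnorm_ub A v : enorm v = 1 -> enorm (A *m v) <= specnorm A.
Proof. by move=> v1; apply: (ub_le_sup (specnorm_has_ubound A)); exists v. Qed.

Lemma specnorm_ge0 A : 0 <= specnorm A.
Proof.
have [[v v1]|no_unit] := pselect (exists v : 'cV[R]_d, enorm v = 1).
  exact: le_trans (enorm_ge0 _) (specnorm_ub A v1).
rewrite /specnorm.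
suff -> : [set enorm (A *m v) | v in [set v : 'cV[R]_d | enorm v = 1]] = set0.
  by rewrite sup0.
by apply/seteqP; split => // y [v v1 _]; apply: no_unit; exists v.
Qed.

Lemma norm_quad_le_specnorm A v : enorm v = 1 -> `|dotv (A *m v) v| <= specnorm A.
Proof.
move=> v1; rewrite (le_trans (norm_dotv_le _ _)) // v1 mulr1.
exact: specnorm_ub.
Qed.

Lemma quad_lb_perturb A B (c : R) v : enorm v = 1 ->
  c <= dotv (A *m v) v -> c - specnorm (B - A) <= dotv (B *m v) v.
Proof.
move=> v1 cA; have := norm_quad_le_specnorm (B - A) v1.
rewrite mulmxDl mulNmx dotvDl -scaleN1r dotvZl => /ler_normlP [+ _]; lra.
Qed.

(* Every eigenvalue of A dominates any lower bound of its quadratic form on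
   the unit sphere: test the form on a normalised eigenvector. *)
Lemma eigenvalue_ge A (a c : R) :
  (forall v, enorm v = 1 -> c <= dotv (A *m v) v) -> eigenvalue A a -> c <= a.
Proof.
move=> quad_lb /eigenvalueP [u uA u_neq0].
have eig : dotv (A *m u^T) u^T = a * dotv u^T u^T.
  by rewrite dotv_mulmx -trmx_mul uA linearZ /= dotvZr.
have n_gt0 : 0 < enorm u^T.
  rewrite sqrtr_gt0 lt_def dotv_ge0 andbT; apply: contra u_neq0 => /eqP u0.
  by rewrite -[u]trmxK (dotv_eq0 u0) trmx0.
have n_neq0 : enorm u^T != 0 by rewrite gt_eqF.
have sqr_inv : (enorm u^T)^-1 * ((enorm u^T)^-1 * dotv u^T u^T) = 1.
  by rewrite -enorm_sqr mulrA -expr2 exprVn mulVf // sqrf_eq0.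
have := quad_lb ((enorm u^T)^-1 *: u^T).
rewrite -scalemxAr dotvZl dotvZr eig !(mulrCA _ a) sqr_inv mulr1; apply.
by rewrite /enorm dotvZl dotvZr sqr_inv sqrtr1.
Qed.

(* A nonpositive lower bound of the quadratic form on the unit sphere is a
   lower bound of lambda_min (nonpositivity covers d = 0, where inf set0 = 0). *)
Lemma lambda_min_ge A (c : R) : c <= 0 ->
  (forall v, enorm v = 1 -> c <= dotv (A *m v) v) -> c <= lambda_min A.
Proof.
move=> c_le0 quad_lb; rewrite /lambda_min.
have [[a eig_a]|no_eig] := pselect (exists a, eigenvalue A a).
  by apply: lb_le_inf; [exists a | move=> b; exact: eigenvalue_ge].
rewrite (_ : [set a | eigenvalue A a] = set0) ?inf0 //.
by apply/seteqP; split => // b eig_b; apply: no_eig; exists b.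
Qed.

End SpectralBounds.

Section ScalarFacts.
Variable R : realFieldType.

Lemma le0_of_le_small (a K : R) :
  (forall t, 0 < t -> t <= 1 -> a <= t * K) -> a <= 0.
Proof.
move=> small; have [K_le0|K_gt0] := lerP K 0.
  by apply: le_trans K_le0; rewrite -[K]mul1r small.
rewrite leNgt; apply/negP => a_gt0.
have aK_gt0 : 0 < a + K by rewrite addr_gt0.
have := small (a / (a + K)).
rewrite divr_gt0 // ler_pdivrMr // mul1r lerDl ltW // mulrAC ler_pdivlMr //.
move=> /(_ isT isT); nra.
Qed.

Lemma cube_split (M r rho : R) :
  M / 6 * (rho ^+ 3 - r ^+ 3) =
  M * r / 4 * (rho ^+ 2 - r ^+ 2) + M / 12 * ((rho - r) ^+ 2 * (2 * rho + r)).
Proof. by field. Qed.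

Lemma cube_remainder_le (r rho om t : R) : 0 <= r -> 0 <= om -> t ^+ 2 <= 1 ->
  (rho - r) ^+ 2 <= t ^+ 2 * om ^+ 2 ->
  (rho - r) ^+ 2 * (2 * rho + r) <= t ^+ 2 * om ^+ 2 * (3 * r + 2 * om).
Proof.
move=> r_ge0 om_ge0 t_le1 dist.
have dist1 : rho - r <= om by nra.
apply: le_trans (_ : (rho - r) ^+ 2 * (3 * r + 2 * om) <= _).
  by rewrite ler_wpM2l ?sqr_ge0 //; lra.
by rewrite ler_wpM2r //; lra.
Qed.

(* The remainder is O(t^3) along a direction orthogonal to the center. *)
Lemma cube_remainder_orth (r rho om t : R) :
  0 <= r -> 0 <= rho -> 0 <= om -> 0 <= t -> rho ^+ 2 = r ^+ 2 + t ^+ 2 * om ^+ 2 ->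
  (rho - r) ^+ 2 * (2 * rho + r) <= 2 * t ^+ 3 * om ^+ 3.
Proof.
move=> r_ge0 rho_ge0 om_ge0 t_ge0 pyth.
have diff_sqr : (rho - r) * (rho + r) = t ^+ 2 * om ^+ 2 by rewrite -subr_sqr pyth; ring.
have tom_ge0 : 0 <= t * om by rewrite mulr_ge0.
have r_le_rho : r <= rho by rewrite -(ler_pXn2r (n := 2)) // pyth lerDl -exprMn sqr_ge0.
have diff_le : rho - r <= t * om.
  rewrite -(ler_pXn2r (n := 2)) ?nnegrE ?subr_ge0 // exprMn -diff_sqr expr2.
  by rewrite ler_wpM2l ?subr_ge0 //; lra.
have : (rho - r) ^+ 2 * (2 * rho + r) <= 2 * (rho - r) * ((rho - r) * (rho + r)).
  rewrite -subr_ge0 (_ : _ - _ = (rho - r) ^+ 2 * r); last by ring.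
  by rewrite mulr_ge0 ?sqr_ge0.
rewrite diff_sqr => /le_trans; apply.
rewrite (_ : 2 * t ^+ 3 * om ^+ 3 = 2 * (t * om) * (t ^+ 2 * om ^+ 2)); last by ring.
by apply: ler_wpM2r; [rewrite mulr_ge0 ?sqr_ge0 | apply: ler_wpM2l].
Qed.

End ScalarFacts.

Section CubicModel.
Variables (R : realType) (d : nat) (M : R) (g : 'cV[R]_d) (H : 'M[R]_d).
Hypothesis H_sym : H^T = H.
Implicit Types (s h w z : 'cV[R]_d).

(* The cubic model centred at the origin: Omega M g H (x + z) x. *)
Definition cubic_model z : R :=
  dotv g z + 2^-1 * dotv (H *m z) z + M / 6 * enorm z ^+ 3.

Lemma cubic_model_excess s h :
  cubic_model (s + h) - cubic_model s =
  dotv (g + H *m s + (M * enorm s / 2) *: s) h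
  + 2^-1 * (dotv (H *m h) h + M * enorm s / 2 * enorm h ^+ 2)
  + M / 12 * ((enorm (s + h) - enorm s) ^+ 2 * (2 * enorm (s + h) + enorm s)).
Proof.
have sym : dotv (H *m h) s = dotv (H *m s) h by rewrite dotv_mulmx H_sym dotvC.
have cube := cube_split M (enorm s) (enorm (s + h)).
rewrite enorm_sqrD in cube.
rewrite /cubic_model mulmxDr !dotvDl !dotvDr sym !dotvZl.
lra.
Qed.

Hypothesis M_ge0 : 0 <= M.
Variable s : 'cV[R]_d.
Hypothesis s_min : forall z, cubic_model s <= cubic_model z.

Lemma cubic_model_first_order w :
  dotv (g + H *m s + (M * enorm s / 2) *: s) w = 0.
Proof.
set l := dotv _ w; set r := enorm s; set om := enorm w; set Q := dotv (H *m w) w.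
set K := (`|Q| + M * r / 2 * om ^+ 2) / 2 + M / 12 * (om ^+ 2 * (3 * r + 2 * om)).
have excess_le t : t ^+ 2 <= 1 -> 0 <= t * l + t ^+ 2 * K.
  move=> t_le1; have := cubic_model_excess s (t *: w).
  rewrite dotvZr -scalemxAr dotvZl dotvZr mulrA -expr2 enorm_sqrZ -/l -/r -/om -/Q.
  move=> excess; have := s_min (s + t *: w); rewrite -subr_ge0 excess.
  have dist := enormD_dist s (t *: w); rewrite enorm_sqrZ in dist.
  have rem := cube_remainder_le (enorm_ge0 s) (enorm_ge0 w) t_le1 dist.
  have rem' := ler_wpM2l (divr_ge0 M_ge0 (ler0n _ 12)) rem.
  rewrite -/r -/om in rem'.
  have Q_le : t ^+ 2 * Q <= t ^+ 2 * `|Q| by rewrite ler_wpM2l ?sqr_ge0 ?ler_norm.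
  rewrite /K; lra.
have [l_le0 l_ge0] : l <= 0 /\ - l <= 0.
  by split; apply: (le0_of_le_small (K := K)) => t t_gt0 t_le1;
    [have := excess_le (- t) | have := excess_le t]; rewrite ?sqrrN; nra.
lra.
Qed.

(* Along a direction w with <s, w> <> 0 the step t = -2 <s, w> / |w|^2 stays
   on the sphere of radius |s|, where the cubic remainder vanishes; along an
   orthogonal direction the remainder is O(t^3) and a limit argument applies. *)
Lemma cubic_model_second_order w :
  0 <= dotv (H *m w) w + M * enorm s / 2 * enorm w ^+ 2.
Proof.
set r := enorm s; set om := enorm w; set S := dotv s w.
set X := dotv (H *m w) w + M * r / 2 * om ^+ 2.
have excess_ge t : 0 <= t ^+ 2 / 2 * X
    + M / 12 * ((enorm (s + t *: w) - r) ^+ 2 * (2 * enorm (s + t *: w) + r)).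
  have := s_min (s + t *: w); rewrite -subr_ge0 cubic_model_excess.
  rewrite cubic_model_first_order add0r -scalemxAr dotvZl dotvZr mulrA -expr2.
  rewrite enorm_sqrZ -/r -/om.
  suff -> : t ^+ 2 / 2 * X =
    2^-1 * (t ^+ 2 * dotv (H *m w) w + M * r / 2 * (t ^+ 2 * om ^+ 2)) by [].
  by rewrite /X; field.
have rho_sqr t : enorm (s + t *: w) ^+ 2 = r ^+ 2 + 2 * t * S + t ^+ 2 * om ^+ 2.
  by rewrite enorm_sqrD dotvZr enorm_sqrZ -/r -/om -/S; ring.
have [S0|S_neq0] := eqVneq S 0.
  rewrite -oppr_le0; apply: (le0_of_le_small (K := M / 3 * om ^+ 3)) => t t_gt0 _.
  have rem := cube_remainder_orth (enorm_ge0 s) (enorm_ge0 _) (enorm_ge0 w)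
    (ltW t_gt0) (etrans (rho_sqr t) _).
  rewrite S0 mulr0 addr0 -/r -/om in rem; have {}rem := rem erefl.
  have := ler_wpM2l (divr_ge0 M_ge0 (ler0n _ 12)) rem; have := excess_ge t.
  have -> : t ^+ 2 / 2 * X = t ^+ 2 / 2 * (X + t * (M / 3 * om ^+ 3))
    - M / 12 * (2 * t ^+ 3 * om ^+ 3) by field.
  have : 0 < t ^+ 2 / 2 by rewrite divr_gt0 ?exprn_gt0.
  move=> t2_gt0 ex rem'.
  have : 0 <= t ^+ 2 / 2 * (X + t * (M / 3 * om ^+ 3)) by lra.
  by rewrite pmulr_rge0 //; lra.
have om_neq0 : om != 0.
  apply: contra S_neq0 => /eqP om0.
  have /dotv_eq0 w0 : dotv w w = 0 by rewrite -enorm_sqr -/om om0 expr0n.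
  by rewrite /S w0 /dotv big1 // => i _; rewrite mxE mulr0.
set t := - 2 * S / om ^+ 2.
have on_sphere : enorm (s + t *: w) = r.
  apply/eqP; rewrite -(eqrXn2 (n := 2)) ?enorm_ge0 // rho_sqr /t.
  by apply/eqP; field.
have := excess_ge t; rewrite on_sphere subrr expr0n /= mul0r mulr0 addr0.
have t_neq0 : t != 0.
  by rewrite /t !mulf_neq0 ?invr_eq0 ?expf_neq0 ?oppr_eq0 ?pnatr_eq0.
by rewrite pmulr_rge0 // divr_gt0 // exprn_even_gt0 //= orbC t_neq0.
Qed.

End CubicModel.

Section CubeArithmetic.
Variable R : realFieldType.

Lemma cube_sum_le (a b : R) : 0 <= a -> 0 <= b -> (a + b) ^+ 3 <= 4 * (a ^+ 3 + b ^+ 3).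
Proof.
move=> a_ge0 b_ge0; rewrite -subr_ge0.
rewrite (_ : _ - _ = 3 * (a + b) * (a - b) ^+ 2); last by ring.
by rewrite mulr_ge0 ?sqr_ge0 // mulr_ge0 // addr_ge0.
Qed.

(* The numerical bound of the theorem, once -lambda_min is known to be at
   most 3/2 M r + e. *)
Lemma cube_budget (M r e X : R) : 0 < M -> 0 <= r -> 0 <= e ->
  X <= 3 / 2 * M * r + e -> X ^+ 3 / M ^+ 2 <= 14 * M * r ^+ 3 + 4 / M ^+ 2 * e ^+ 3.
Proof.
move=> M_gt0 r_ge0 e_ge0 X_le.
have Mr_ge0 : 0 <= 3 / 2 * M * r by rewrite !mulr_ge0 // ltW.
have X3_le : X ^+ 3 <= (3 / 2 * M * r + e) ^+ 3.
  have [X_le0|X_gt0] := lerP X 0.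
    apply: le_trans (_ : 0 <= _); last by rewrite exprn_ge0 // addr_ge0.
    by rewrite exprS mulr_le0_ge0 ?sqr_ge0.
  by rewrite lerXn2r // nnegrE ?addr_ge0 // ltW.
have := le_trans X3_le (cube_sum_le Mr_ge0 e_ge0).
rewrite ler_pdivrMr ?exprn_gt0 // => /le_trans; apply.
rewrite -subr_ge0 (_ : _ - _ = M ^+ 3 * r ^+ 3 / 2); last by field; rewrite gt_eqF.
by rewrite divr_ge0 // mulr_ge0 // exprn_ge0 // ltW.
Qed.

End CubeArithmetic.

Theorem mainTheorem3 (R : realType) (d : nat) (f : 'cV[R]_d -> R)
    (gradf : 'cV[R]_d -> 'cV[R]_d) (hessf : 'cV[R]_d -> 'M[R]_d) (L M : R)
    (x g xp : 'cV[R]_d) (H : 'M[R]_d) :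
  (* f is differentiable with gradient gradf *)
  (forall z, differentiable f z /\ forall h, 'd f z h = dotv (gradf z) h) ->
  (* gradf is differentiable with Jacobian hessf, i.e. f is twice
     differentiable with Hessian hessf *)
  (forall z, differentiable gradf z /\ forall h, 'd gradf z h = hessf z *m h) ->
  (* the Hessian is L-Lipschitz w.r.t. the spectral norm *)
  (forall y z, specnorm (hessf y - hessf z) <= L * enorm (y - z)) ->
  H^T = H ->
  0 < M -> L <= M ->
  (* xp is a global minimizer of y |-> Omega_{M,g,H}(y,x) *)
  (forall y, Omega M g H xp x <= Omega M g H y x) ->
  (- lambda_min (hessf xp)) ^+ 3 / M ^+ 2
    <= 14 * M * enorm (xp - x) ^+ 3
       + 4 / M ^+ 2 * specnorm (hessf x - H) ^+ 3.
Proof.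
move=> _ _ hess_lip H_sym M_gt0 L_le_M xp_min.
set s := xp - x; set r := enorm s; set e := specnorm (hessf x - H).
have s_min z : cubic_model M g H s <= cubic_model M g H z.
  by have := xp_min (z + x); rewrite /Omega addrK.
have hess_quad_lb v : enorm v = 1 -> - (3 / 2 * M * r + e) <= dotv (hessf xp *m v) v.
  move=> v1.
  have := cubic_model_second_order H_sym (ltW M_gt0) s_min v.
  rewrite v1 expr1n mulr1 -/r => H_psd.
  have H_lb : - (M * r / 2) <= dotv (H *m v) v by lra.
  have := quad_lb_perturb (hessf xp) v1 (quad_lb_perturb (hessf x) v1 H_lb).
  have := hess_lip xp x; have := ler_wpM2r (enorm_ge0 s) L_le_M.
  rewrite -/s -/r -/e; lra.
have lmin := lambda_min_ge _ hess_quad_lb.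
apply: cube_budget; rewrite ?enorm_ge0 ?specnorm_ge0 // lerNl lmin //.
by rewrite oppr_le0 addr_ge0 ?specnorm_ge0 // !mulr_ge0 ?enorm_ge0 // ltW.
Qed.
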